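(* Let $G$ be a connected graph with diameter $d\in\{3,4\}$. If $\dim(G)=n(G)-d$, then $D(G)=n(G)-2$ if and only if $G$ is isomorphic to $P_4$.
   Context: All graphs are finite and simple; $n(G)=|V(G)|$; $P_4$ is the path on four vertices; the diameter is the largest distance between two vertices. For a connected graph $G$ with shortest-path distance $d_G$, a set $S\subseteq V(G)$ is resolving if for any two distinct vertices $x,y$ there is $s\in S$ with $d_G(x,s)\neq d_G(y,s)$; the metric dimension $\dim(G)$ is the minimum size of a resolving set. A distinguishing coloring of a graph $G$ is a (not necessarily proper) vertex coloring such that the only automorphism of $G$ mapping every vertex to a vertex of the same color is the identity; the distinguishing number $D(G)$ is the minimum number of colors in a distinguishing coloring of $G$. *)

(* A simple graph is a symmetric irreflexive relation e on a finType T. *)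
From mathcomp Require Import all_boot all_fingroup.
Set Implicit Arguments. Unset Strict Implicit. Unset Printing Implicit Defensive.

Section Graph.
Variables (T : finType) (e : rel T).

Fixpoint within (k : nat) (x y : T) : bool :=
  if k is k'.+1 then within k' x y || [exists z, within k' x z && e z y]
  else x == y.

Definition connected_graph : Prop := forall x y : T, exists k, within k x y.

(* shortest-path distance: least k <= #|T| with a walk of length <= k
   (correct for connected graphs, where distances are < #|T|) *)
Definition gdist (x y : T) : nat := find (fun k => within k x y) (iota 0 #|T|.+1).

Definition diameter : nat := \max_(x : T) \max_(y : T) gdist x y.

Definition resolving (S : {set T}) : bool :=
  [forall x : T, forall y : T, (x != y) ==> [exists s in S, gdist x s != gdist y s]].

Definition metric_dim : nat := \big[minn/#|T|]_(S : {set T} | resolving S) #|S|.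

Definition graph_aut (f : {perm T}) : bool := [forall x, forall y, e (f x) (f y) == e x y].

Definition distinguishing (k : nat) (c : {ffun T -> 'I_k}) : bool :=
  [forall f : {perm T}, (graph_aut f && [forall x, c (f x) == c x]) ==> (f == 1%g)].

Definition distinguishing_number : nat :=
  \big[minn/#|T|]_(k < #|T|.+1 | [exists c : {ffun T -> 'I_k}, distinguishing c]) (k : nat).

End Graph.

Definition P4rel : rel 'I_4 := fun i j => (i.+1 == j :> nat) || (j.+1 == i :> nat).

Definition isomorphic_to_P4 (T : finType) (e : rel T) : Prop :=
  exists f : T -> 'I_4, bijective f /\ forall x y, e x y = P4rel (f x) (f y).

From mathcomp Require Import all_boot all_fingroup.
From mathcomp Require Import zify.
Set Implicit Arguments. Unset Strict Implicit. Unset Printing Implicit Defensive.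

(* Only [3 <= diameter] matters.
   A diametral pair yields a geodesic a-x-y-b.  The triples {a,x,b} and {a,y,b} have
   pairwise distinct distances, so an automorphism permuting such a triple fixes it.
   If G has a fifth vertex w, give the triple one colour, w and x or y (whichever has
   a different distance to a than w) a second colour, and every other vertex its own
   colour: this colouring is distinguishing with n - 3 colours.  Otherwise G is P4,
   whose reversal forces two colours while marking an end vertex suffices. *)

Lemma bigminn_le (I : eqType) (r : seq I) (P : pred I) (F : I -> nat) x0 i0 :
  i0 \in r -> P i0 -> \big[minn/x0]_(i <- r | P i) F i <= F i0.
Proof.
elim: r => [|j r IH] //; rewrite in_cons big_cons => /orP [/eqP <- Pi|ir Pi].
  by rewrite Pi geq_minl.
case: (P j); last exact: IH.
by rewrite (leq_trans (geq_minr _ _)) // IH.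
Qed.

Lemma P4rel_rev (i j : 'I_4) : P4rel (rev_ord i) (rev_ord j) = P4rel i j.
Proof. by case: i => [[|[|[|[|?]]]] ?]; case: j => [[|[|[|[|?]]]] ?]. Qed.

Lemma P4rel_rigid (h : 'I_4 -> 'I_4) : injective h ->
  (forall i j, P4rel (h i) (h j) = P4rel i j) -> h ord0 = ord0 -> h =1 id.
Proof.
move=> hinj hP h0.
pose o1 := @Ordinal 4 1 isT; pose o2 := @Ordinal 4 2 isT; pose o3 := @Ordinal 4 3 isT.
have : [&& h o1 == o1, h o2 == o2 & h o3 == o3].
  have := hP ord0 o1; have := hP o1 o2; have := hP o2 o3.
  have := inj_eq hinj ord0 o2; have := inj_eq hinj o1 o3.
  rewrite h0; case: (h o1) => [[|[|[|[|?]]]] ?] //; case: (h o2) => [[|[|[|[|?]]]] ?] //;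
  by case: (h o3) => [[|[|[|[|?]]]] ?].
case/and3P => /eqP h1 /eqP h2 /eqP h3 [[|[|[|[|k]]]] lt4] //.
- by rewrite (_ : Ordinal lt4 = ord0) //; apply: val_inj.
- by rewrite (_ : Ordinal lt4 = o1) //; apply: val_inj.
- by rewrite (_ : Ordinal lt4 = o2) //; apply: val_inj.
- by rewrite (_ : Ordinal lt4 = o3) //; apply: val_inj.
Qed.

Section SimpleGraph.
Variables (T : finType) (e : rel T).
Hypotheses (e_sym : symmetric e) (e_irr : irreflexive e).

Lemma within_le m n u v : m <= n -> within e m u v -> within e n u v.
Proof.
elim: n => [|n IH]; first by rewrite leqn0 => /eqP ->.
rewrite leq_eqVlt => /orP [/eqP -> //|]; rewrite ltnS => hm h.
by rewrite /= IH.
Qed.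

Lemma within_refl k u : within e k u u.
Proof. exact: (@within_le 0 k u u (leq0n k) (eqxx u)). Qed.

Lemma within1E u v : within e 1 u v = (u == v) || e u v.
Proof.
rewrite /=; congr orb; apply/existsP/idP => [[z /andP [/eqP -> //]]|euv].
by exists u; rewrite eqxx.
Qed.

Lemma within_trans m n u v w :
  within e m u v -> within e n v w -> within e (m + n) u w.
Proof.
move=> h1; elim: n w => [|n IH] w /=; first by move=> /eqP <-; rewrite addn0.
rewrite addnS /= => /orP [h|/existsP [z /andP [hz ez]]]; first by rewrite IH.
by apply/orP; right; apply/existsP; exists z; rewrite IH.
Qed.

Lemma within_edge u v : e u v -> within e 1 u v.
Proof. by rewrite within1E => ->; rewrite orbT. Qed.

Lemma within_sym k u v : within e k u v = within e k v u.
Proof.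
suff H k' u' v' : within e k' u' v' -> within e k' v' u'.
  by apply/idP/idP; apply: H.
elim: k' u' v' => [|n IH] u' v' /=; first by rewrite eq_sym.
move=> /orP [h|/existsP [z /andP [hz ez]]]; first by rewrite IH.
apply: (@within_trans 1 n _ z); last exact: IH.
by apply: within_edge; rewrite e_sym.
Qed.

Lemma gdist_sym u v : gdist e u v = gdist e v u.
Proof. by apply: eq_find => k; rewrite within_sym. Qed.

Lemma gdist_refl u : gdist e u u = 0.
Proof. by rewrite /gdist /= eqxx. Qed.

Lemma gdist_gt0 u v : u != v -> 0 < gdist e u v.
Proof. by rewrite /gdist /= => /negbTE ->. Qed.

Lemma gdist_eq k u v : k <= #|T| -> within e k u v -> ~~ within e k.-1 u v ->
  gdist e u v = k.
Proof.
move=> hk hw hn; rewrite /gdist.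
have -> : #|T|.+1 = k + (#|T| - k).+1 by rewrite -subSn // subnKC // ltnW.
rewrite iotaD find_cat size_iota add0n /= hw addn0.
suff -> : has (within e ^~ u ^~ v) (iota 0 k) = false by [].
apply/negbTE/hasPn => j; rewrite mem_iota add0n => /andP [_ hj].
by apply: contra hn; apply: within_le; rewrite -ltnS (ltn_predK hj).
Qed.

Lemma within_lt_gdist k u v : k < gdist e u v -> ~~ within e k u v.
Proof.
move=> h; have := find_size (within e ^~ u ^~ v) (iota 0 #|T|.+1).
rewrite size_iota => hs.
by have := before_find 0 h; rewrite nth_iota ?add0n ?(leq_trans h) // => ->.
Qed.

Lemma within_exit k K u v : ~~ within e k u v -> within e K u v ->
  exists b, within e k.+1 u b && ~~ within e k u b.
Proof.
elim: K v => [|K IH] v hn; first by move/(within_le (leq0n k)); rewrite (negbTE hn).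
move=> /= /orP [|/existsP [z /andP [hz ez]]]; first exact: IH.
case hzk: (within e k u z); last by apply: (IH z); rewrite ?hzk.
by exists v; rewrite hn andbT /=; apply/orP; right; apply/existsP; exists z; rewrite hzk.
Qed.

Lemma within_last_edge k u v : within e k.+2 u v -> ~~ within e k.+1 u v ->
  exists z, [/\ within e k.+1 u z, ~~ within e k u z & e z v].
Proof.
move=> + hn => /= /orP [h|/existsP [z /andP [hz ezv]]]; first by case/negP: hn.
exists z; split => //.
by apply: contra hn => hk; rewrite -addn1; apply: within_trans hk (within_edge ezv).
Qed.

Lemma graph_autP (f : {perm T}) : graph_aut e f -> forall x y, e (f x) (f y) = e x y.
Proof. by move=> /forallP ha x y; apply/eqP; move/forallP: (ha x). Qed.

Lemma within_aut (f : {perm T}) : graph_aut e f ->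
  forall k u v, within e k (f u) (f v) = within e k u v.
Proof.
move=> /graph_autP hf; elim=> [|k IH] u v /=; first by rewrite (inj_eq perm_inj).
rewrite IH; congr orb; apply/existsP/existsP => [[z hz]|[z hz]].
  by exists (f^-1 z)%g; rewrite -IH -hf permKV.
by exists (f z); rewrite IH hf.
Qed.

Lemma gdist_aut (f : {perm T}) u v : graph_aut e f -> gdist e (f u) (f v) = gdist e u v.
Proof. by move=> ha; apply: eq_find => k; rewrite within_aut. Qed.

Lemma aut_fix_triple (f : {perm T}) a p q : graph_aut e f -> uniq [:: a; p; q] ->
  gdist e a p != gdist e p q -> gdist e p q != gdist e a q -> gdist e a p != gdist e a q ->
  {in [:: a; p; q], forall x, f x \in [:: a; p; q]} -> [/\ f a = a, f p = p & f q = q].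
Proof.
move=> ha /and3P []; rewrite !inE negb_or => /andP [ap aq] pq _ PQ QR PR sub.
have s1 := gdist_sym a p; have s2 := gdist_sym p q; have s3 := gdist_sym a q.
have [P0 Q0 R0] := And3 (gdist_gt0 ap) (gdist_gt0 pq) (gdist_gt0 aq).
have := gdist_aut a p ha; have := gdist_aut p q ha; have := gdist_aut a q ha.
have := sub a; have := sub p; have := sub q; rewrite !inE !eqxx ?orbT.
by move=> /(_ isT) /or3P [] /eqP -> /(_ isT) /or3P [] /eqP -> /(_ isT) /or3P [] /eqP ->;
  rewrite ?gdist_refl; try by split; lia.
Qed.

Lemma distinguishing_number_le_card : distinguishing_number e <= #|T|.
Proof.
apply: (big_ind (fun m => m <= #|T|)) => // [m n hm _|k _]; last by rewrite -ltnS.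
exact: leq_trans (geq_minl m n) hm.
Qed.

Lemma distinguishing_number_le k (c : {ffun T -> 'I_k}) :
  k <= #|T| -> distinguishing e c -> distinguishing_number e <= k.
Proof.
rewrite -ltnS => hk dc.
apply: (@bigminn_le _ _ _ (fun i : 'I_#|T|.+1 => i : nat) _ (Ordinal hk)).
  exact: mem_index_enum.
by apply/existsP; exists c.
Qed.

Lemma distinguishing_number_le_image (U : finType) (g : T -> U) :
  (forall f : {perm T}, graph_aut e f -> (forall x, g (f x) = g x) -> f = 1%g) ->
  distinguishing_number e <= #|[set g x | x in T]|.
Proof.
move=> hg; case: (pickP T) => [x0 _|T0]; last first.
  by apply: leq_trans distinguishing_number_le_card _; rewrite (eq_card0 T0).
set S := [set g x | x in T].
have gS x : g x \in S by apply: imset_f.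
pose c := [ffun x => enum_rank_in (gS x0) (g x)].
apply: (distinguishing_number_le (c := c)); first exact: leq_imset_card.
apply/forallP => f; apply/implyP => /andP [ha /forallP hc]; apply/eqP/hg => // x.
have := hc x; rewrite !ffunE => /eqP /(congr1 (enum_val (A := S))).
by rewrite !enum_rankK_in.
Qed.

Lemma distinguishing_number_ge2 (r : {perm T}) : graph_aut e r -> r != 1%g ->
  2 <= distinguishing_number e.
Proof.
move=> ha r1.
have [x rx] : exists x, r x != x.
  apply/existsP; apply: contraNT r1 => /existsPn fixr.
  by apply/eqP/permP => x; rewrite perm1; apply/eqP/negbNE/fixr.
apply: (big_ind (fun m => 2 <= m)) => [|m n hm hn|k].
- by have := cards2 (r x) x; rewrite rx => <-; apply: max_card.
- by rewrite leq_min hm hn.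
- move=> /existsP [c /forallP /(_ r) /implyP hc]; rewrite leqNgt.
  apply: contra r1 => k_lt2; apply: hc; rewrite ha /=; apply/forallP => y.
  apply/eqP/val_inj; case: (c (r y)) (c y) => [i hi] [j hj] /=.
  by move: (k : nat) k_lt2 hi hj => n; lia.
Qed.

Section Collapse.
Variables a p q u w : T.
Hypothesis apquw_uniq : uniq [:: a; p; q; u; w].

Definition collapse v := if v \in [:: a; p; q] then a else if v == w then u else v.

Lemma collapse_fiber x y : collapse x = collapse y ->
  [|| x == y, (x \in [:: a; p; q]) && (y \in [:: a; p; q])
            | (x \in [:: u; w]) && (y \in [:: u; w])].
Proof.
rewrite /collapse; case xL: (x \in _); case yL: (y \in _); rewrite /= ?orbT //;
  case: eqP => [-> | _]; case: eqP => [-> | _] //= h; subst; rewrite ?inE ?eqxx ?orbT //;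
  by [move: apquw_uniq; rewrite /= !inE ?eqxx ?orbT | rewrite !inE ?eqxx ?orbT in xL yL].
Qed.

Lemma card_collapse_image : #|[set collapse v | v in T]| <= #|T| - 3.
Proof.
have := apquw_uniq; rewrite /= !inE !negb_or.
move=> /andP [/and4P [ap aq _ aw] /andP [/and3P [pq pu pw] /andP [/andP [qu qw] /andP [uw _]]]].
have sub : [set collapse v | v in T] \subset ~: [set z in [:: p; q; w]].
  apply/subsetP => _ /imsetP [v _ ->]; rewrite /collapse.
  case: ifP => [_|]; first by rewrite !inE (negbTE ap) (negbTE aq) (negbTE aw).
  rewrite !inE => /norP [_ /norP [pv qv]]; case: ifP => [_|/negbT vw].
    by rewrite [u == p]eq_sym [u == q]eq_sym (negbTE pu) (negbTE qu) (negbTE uw).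
  by rewrite (negbTE pv) (negbTE qv) (negbTE vw).
apply: leq_trans (subset_leq_card sub) _.
have card3 : #|[set z in [:: p; q; w]]| = 3.
  by rewrite cardsE; apply/card_uniqP; rewrite /= !inE negb_or pq pw qw.
by rewrite -(cardsC [set z in [:: p; q; w]]) card3 addKn.
Qed.

Lemma distinguishing_number_collapse :
  gdist e a p != gdist e p q -> gdist e p q != gdist e a q -> gdist e a p != gdist e a q ->
  gdist e u a != gdist e w a -> distinguishing_number e <= #|T| - 3.
Proof.
move=> PQ QR PR UW; apply: leq_trans card_collapse_image.
apply: distinguishing_number_le_image => f ha gf; have fiber x := collapse_fiber (gf x).
have := apquw_uniq; rewrite -[[:: a; p; q; u; w]]/([:: a; p; q] ++ [:: u; w]) cat_uniq.
move=> /and3P [apq_uniq /hasPn disj _].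
have fL x : x \in [:: a; p; q] -> f x \in [:: a; p; q].
  move=> xL; case/or3P: (fiber x) => [/eqP -> // | /andP [] // | /andP [_ xM]].
  by have := disj x xM; rewrite xL.
have fM x : x \in [:: u; w] -> f x \in [:: u; w].
  move=> xM; case/or3P: (fiber x) => [/eqP -> // | /andP [_ xL] | /andP [] //].
  by have := disj x xM; rewrite xL.
have [fa fp fq] : [/\ f a = a, f p = p & f q = q] by exact: aut_fix_triple.
(* u and w are told apart by their distance to the fixed vertex a *)
have fM_id x : x \in [:: u; w] -> f x = x.
  move=> xM; have := fM x xM; have := gdist_aut x a ha; rewrite fa.
  move: xM; rewrite !inE => /orP [] /eqP -> d /orP [] /eqP fx //;
  by move: UW; rewrite -d fx ?eqxx // eq_sym d eqxx.
apply/permP => x; rewrite perm1.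
case/or3P: (fiber x) => [/eqP // | /andP [_] | /andP [_ /fM_id //]].
by rewrite !inE => /or3P [] /eqP ->.
Qed.

End Collapse.

Lemma exists_geodesic3 : connected_graph e -> 2 < diameter e ->
  exists a x y b, [/\ e a x, e x y, e y b & ~~ within e 2 a b].
Proof.
move=> hc hd; have [a [v hav]] : exists a v, 2 < gdist e a v.
  case: (boolP [exists a, exists v, 2 < gdist e a v]) => [|/existsPn near].
    by move=> /existsP [a /existsP [v h]]; exists a, v.
  move: hd; rewrite ltnNge => /negP []; apply/bigmax_leqP => u _.
  by apply/bigmax_leqP => w _; move/existsPn: (near u) => /(_ w); rewrite -leqNgt.
have [K hK] := hc a v.
have [b /andP [hb3 hb2]] := within_exit (within_lt_gdist hav) hK.
have [y [hy2 hy1 eyb]] := within_last_edge hb3 hb2.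
have [x [hx1 hx0 exy]] := within_last_edge hy2 hy1.
by exists a, x, y, b; split => //; move: hx1; rewrite within1E (negbTE (hx0 : a != x)).
Qed.

Lemma isomorphic_to_P4_of_labelling (g : 'I_4 -> T) : injective g -> #|T| <= 4 ->
  (forall i j, e (g i) (g j) = P4rel i j) -> isomorphic_to_P4 e.
Proof.
move=> ginj hT hg.
have [f gK fK] : bijective g by apply: inj_card_bij; rewrite ?card_ord.
by exists f; split; [exists g | move=> x y; rewrite -hg !fK].
Qed.

Lemma within_edge2 u v w : e u v -> e v w -> within e 2 u w.
Proof. by move=> euv evw; apply: (@within_trans 1 1 _ v); apply: within_edge. Qed.

Section Geodesic3.
Variables a x y b : T.
Hypotheses (eax : e a x) (exy : e x y) (eyb : e y b) (nab : ~~ within e 2 a b).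

Lemma geodesic3_nonedges : [/\ e a y = false, e x b = false & e a b = false].
Proof.
split; apply: contraNF nab; [move=> eay | move=> exb | move/within_edge].
- exact: within_edge2 eay eyb.
- exact: within_edge2 eax exb.
- exact: within_le.
Qed.

Lemma geodesic3_uniq : uniq [:: a; x; y; b].
Proof.
have nab1 : ~~ within e 1 a b by apply: contra nab; apply: within_le.
have ax : a != x by apply: contraTneq eax => ->; rewrite e_irr.
have xy : x != y by apply: contraTneq exy => ->; rewrite e_irr.
have yb : y != b by apply: contraTneq eyb => ->; rewrite e_irr.
have ay : a != y by apply: contraNneq nab1 => ->; apply: within_edge.
have xb : x != b by apply: contraNneq nab1 => <-; apply: within_edge.
have ab : a != b by apply: contraNneq nab1 => ->; apply: within_refl.
by rewrite /= !inE !negb_or ax ay ab xy xb yb.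
Qed.

Lemma geodesic3_card : #|[:: a; x; y; b]| = 4.
Proof. exact/card_uniqP/geodesic3_uniq. Qed.

Lemma geodesic3_gdist :
  [/\ gdist e a x = 1, gdist e a y = 2, gdist e a b = 3, gdist e x b = 2 & gdist e y b = 1].
Proof.
have [eay exb _] := geodesic3_nonedges.
have := geodesic3_uniq; rewrite /= !inE !negb_or.
move=> /and4P [/and3P [ax ay _] /andP [_ xb] yb _].
have T4 : 4 <= #|T| by rewrite -geodesic3_card max_card.
have dist k u v : k <= 3 -> within e k u v -> ~~ within e k.-1 u v -> gdist e u v = k.
  by move=> k3; apply: gdist_eq; apply: leq_trans k3 (ltnW T4).
split; apply: dist => //;
  rewrite ?within1E ?negb_or ?ay ?xb ?eay ?exb ?eax ?eyb ?orbT //.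
- exact: within_edge2 eax exy.
- exact: within_trans (within_edge2 eax exy) (within_edge eyb).
- exact: within_edge2 exy eyb.
Qed.

Lemma geodesic3_extra w : w \notin [:: a; x; y; b] ->
  distinguishing_number e <= #|T| - 3.
Proof.
have [dax day dab dxb dyb] := geodesic3_gdist.
have := geodesic3_uniq; rewrite /= !inE !negb_or.
move=> /and4P [/and3P [ax ay ab] /andP [xy xb] yb _] /and4P [wa wx wy wb].
have [dwa | dwa] := eqVneq (gdist e w a) 2.
  apply: (@distinguishing_number_collapse a y b x w); rewrite ?day ?dyb ?dab //.
    rewrite /= !inE !negb_or ![_ == w]eq_sym [y == x]eq_sym [b == x]eq_sym.
    by rewrite ay ab ax yb xy xb wa wx wy wb.
  by rewrite dwa gdist_sym dax.
apply: (@distinguishing_number_collapse a x b y w); rewrite ?dax ?dxb ?dab //.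
  rewrite /= !inE !negb_or ![_ == w]eq_sym [b == y]eq_sym.
  by rewrite ax ab ay xb xy yb wa wx wy wb.
by rewrite (gdist_sym y) day eq_sym.
Qed.

Lemma geodesic3_P4 : #|T| <= 4 -> isomorphic_to_P4 e.
Proof.
move=> T4; pose g (i : 'I_4) := nth a [:: a; x; y; b] i.
apply: (@isomorphic_to_P4_of_labelling g) => // [i j /eqP|].
  by rewrite nth_uniq ?geodesic3_uniq // => /eqP /val_inj.
have [eay exb eab] := geodesic3_nonedges.
have edges := (e_irr, eax, exy, eyb, eay, exb, eab).
by move=> [[|[|[|[|i]]]] hi] [[|[|[|[|j]]]] hj] //; rewrite /g /= ?edges // e_sym ?edges.
Qed.

End Geodesic3.

Lemma isomorphic_to_P4_of_distinguishing : connected_graph e -> 2 < diameter e ->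
  distinguishing_number e = #|T| - 2 -> isomorphic_to_P4 e.
Proof.
move=> hc hd hD; have [a [x [y [b [eax exy eyb nab]]]]] := exists_geodesic3 hc hd.
have [T5 | T4] := ltnP 4 #|T|; last exact: geodesic3_P4 eax exy eyb nab T4.
have [w /(geodesic3_extra eax exy eyb nab)] : exists w, w \notin [:: a; x; y; b].
  apply/existsP; apply: contraTT T5 => /existsPn all; rewrite -leqNgt.
  rewrite -(geodesic3_card eax exy eyb nab); apply/subset_leq_card/subsetP => z _.
  by rewrite -[_ \in _]negbK all.
by rewrite hD; move: #|T| T5 => n n5; rewrite leqNgt ltn_sub2l // (leq_trans _ n5).
Qed.

Lemma card_isomorphic_to_P4 : isomorphic_to_P4 e -> #|T| = 4.
Proof. by case=> phi [phi_bij _]; rewrite (bij_eq_card phi_bij) card_ord. Qed.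

Lemma distinguishing_number_P4 : isomorphic_to_P4 e -> distinguishing_number e = 2.
Proof.
case=> phi [[psi phiK psiK] hE]; apply/eqP; rewrite eqn_leq; apply/andP; split.
  apply: leq_trans (distinguishing_number_le_image (g := fun x => phi x == ord0) _) _.
    move=> f ha gf; pose h i := phi (f (psi i)).
    have hinj : injective h by move=> i j /(can_inj phiK) /perm_inj /(can_inj psiK).
    have hP i j : P4rel (h i) (h j) = P4rel i j by rewrite /h -hE graph_autP // hE !psiK.
    have h0 : h ord0 = ord0 by apply/eqP; rewrite /h gf psiK.
    apply/permP => x; rewrite perm1; apply: (can_inj phiK).
    by have := P4rel_rigid hinj hP h0 (phi x); rewrite /h phiK.
  by rewrite -[X in _ <= X]card_bool max_card.
have rinj : injective (fun x => psi (rev_ord (phi x))).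
  by move=> x y /(can_inj psiK) /rev_ord_inj /(can_inj phiK).
apply: (@distinguishing_number_ge2 (perm rinj)).
  by apply/forallP => x; apply/forallP => y; rewrite !permE hE !psiK P4rel_rev -hE.
apply/eqP => /permP /(_ (psi ord0)); rewrite permE perm1 psiK.
by move/(can_inj psiK)/(congr1 val).
Qed.

End SimpleGraph.

Theorem lemma4p12 (T : finType) (e : rel T)
  (e_sym : symmetric e) (e_irr : irreflexive e)
  (e_conn : connected_graph e)
  (hd : diameter e = 3 \/ diameter e = 4)
  (hdim : metric_dim e = #|T| - diameter e) :
  distinguishing_number e = #|T| - 2 <-> isomorphic_to_P4 e.
Proof.
split; last by move=> iso; rewrite distinguishing_number_P4 // (card_isomorphic_to_P4 iso).
by apply: isomorphic_to_P4_of_distinguishing => //; case: hd => ->.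
Qed.
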